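(* Let $(\bar z_m)_{m\in\mathbb N}$ be a sequence in $\ell_\infty$ which converges weak$^*$ (as the dual of $\ell_1$) to $\bar z\in\ell_\infty$, and let $|||\cdot|||$ be the norm on $\ell_\infty$ defined in the context. Then $\lim_m|||\bar z_m|||$ exists if and only if $\lim_m\|\bar z_m\|_\infty$ exists. Moreover, $\lim_m|||\bar z_m|||=|||\bar z|||$ if and only if $\lim_m\|\bar z_m\|_\infty=\|\bar z\|_\infty$.
   Context: Let $c_{00}(\mathbb Q)$ be the set of finitely supported sequences with rational coefficients, and let $(u_n)_{n\in\mathbb N}$ be a sequence in $c_{00}(\mathbb Q)$ which lists every element of $c_{00}(\mathbb Q)$ infinitely many times. Let $(a_n)_{n\in\mathbb N}$ be a strictly increasing sequence of positive integers with $a_n>\max\operatorname{supp} u_n$ and $a_n>\|u_n\|_1$ for every $n$. $(e_n)$ denotes the canonical unit vectors and $\langle x,y\rangle=\sum_n x_ny_n$ for $x\in\ell_\infty$, $y\in\ell_1$. For $\bar x\in\ell_\infty$ define $|||\bar x||| = \|\bar x\|_\infty + \sum_{n} 2^{-a_n^2}|\langle \bar x, u_n - e_{a_n}\rangle|$ (it is known that $\sum_n 2^{-a_n^2}\|u_n-e_{a_n}\|_1\le 2$). *)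

From HB Require Import structures.
From mathcomp Require Import all_boot all_order all_algebra.
From mathcomp Require Import all_classical all_reals all_analysis.
Set Implicit Arguments. Unset Strict Implicit. Unset Printing Implicit Defensive.
Import Order.TTheory GRing.Theory Num.Theory.
Import numFieldNormedType.Exports.
Local Open Scope classical_set_scope.
Local Open Scope ring_scope.

Definition linf_mem {R : realType} (x : nat -> R) : Prop :=
  exists M : R, forall n, `|x n| <= M.

Definition l1_mem {R : realType} (y : nat -> R) : Prop :=
  cvgn (series (fun k => `|y k|)).

Definition linf_norm {R : realType} (x : nat -> R) : R :=
  sup [set `|x n| | n in setT].

Definition rsum {R : realType} (f : nat -> R) : R := limn (series f).

Definition pairing {R : realType} (x y : nat -> R) : R :=
  rsum (fun k => x k * y k).

Definition unit_vec {R : realType} (j : nat) : nat -> R :=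
  fun k => (k == j)%:R.

Definition rat_seq {R : realType} (v : nat -> rat) : nat -> R :=
  fun k => ratr (v k).

Definition finitely_supported (v : nat -> rat) : Prop :=
  exists N, forall k, (N <= k)%N -> v k = 0.

Definition lists_c00_inf_often (u : nat -> nat -> rat) : Prop :=
  (forall n, finitely_supported (u n)) /\
  forall v, finitely_supported v -> forall M, exists n, (M <= n)%N /\ u n = v.

Definition admissible_a (u : nat -> nat -> rat) (a : nat -> nat) : Prop :=
  (forall n, (a n < a n.+1)%N) /\
  (forall n, (0 < a n)%N) /\
  (forall n k, u n k != 0 -> (k < a n)%N) /\
  (forall n, \sum_(k < a n) `|u n k| < (a n)%:R).

Definition triple_norm {R : realType} (u : nat -> nat -> rat) (a : nat -> nat)
    (x : nat -> R) : R :=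
  linf_norm x +
  rsum (fun n => (2 : R) ^- (a n ^ 2)%N *
      `|pairing x (fun k => rat_seq (u n) k - unit_vec (a n) k)|).

(* weak* convergence in ell_infty = (ell_1)^* *)
Definition weak_star_cvg {R : realType} (z : nat -> nat -> R) (zl : nat -> R) : Prop :=
  forall y : nat -> R, l1_mem y -> (fun m => pairing (z m) y) @ \oo --> pairing zl y.

From HB Require Import structures.
From mathcomp Require Import all_boot all_order all_algebra.
From mathcomp Require Import all_classical all_reals all_analysis.
From mathcomp Require Import lra zify.
Import Order.TTheory GRing.Theory Num.Theory.
Import numFieldNormedType.Exports.
Local Open Scope classical_set_scope.
Local Open Scope ring_scope.

(* Write |||x||| = ||x||_oo + P(x) with P(x) = sum_n 2^(-a_n^2) |<x, u_n - e_(a_n)>|.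
   Weak* convergence gives coordinatewise convergence z_m k --> zl k. No uniform
   boundedness principle is needed: in each of the four implications the sequence
   assumed to converge, ||z_m||_oo or |||z_m||| >= ||z_m||_oo, bounds the z_m
   uniformly. For uniformly bounded x, |<x, u_n - e_(a_n)>| <= (a_n + 1) sup_k |x_k|
   and sum_n 2^(-a_n^2) (a_n + 1) < oo, so Tannery's theorem gives P(z_m) --> P(zl).
   Both claims then follow from |||z_m||| = ||z_m||_oo + P(z_m). *)

Section real_series.
Context {R : realType}.
Implicit Types (f g D : nat -> R) (N : nat).

Lemma series_finite_support f N n : (forall k, (N <= k)%N -> f k = 0) ->
  (N <= n)%N -> series f n = \sum_(k < N) f k.
Proof.
move=> f0 Nn; rewrite /series /= (big_cat_nat (n:=N)) //=.
rewrite [X in _ + X]big_nat_cond [X in _ + X]big1 ?addr0 ?big_mkord //.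
by move=> k /andP[/andP[Nk _] _]; exact: f0.
Qed.

Lemma cvg_series_finite_support f N : (forall k, (N <= k)%N -> f k = 0) ->
  series f @ \oo --> \sum_(k < N) f k.
Proof.
move=> f0; apply: cvg_near_cst; near=> n.
by apply: series_finite_support => //; near: n; exact: nbhs_infty_ge.
Unshelve. all: by end_near. Qed.

Lemma rsum_finite_support f N : (forall k, (N <= k)%N -> f k = 0) ->
  rsum f = \sum_(k < N) f k.
Proof. by move=> /cvg_series_finite_support/cvg_lim; apply. Qed.

Lemma rsum_ge0 f : (forall n, 0 <= f n) -> cvgn (series f) -> 0 <= rsum f.
Proof. by move=> f0 cf; apply: limr_ge => //; apply: nearW => n; exact: sumr_ge0. Qed.

Lemma cvg_series_dominated f D : (forall n, `|f n| <= D n) ->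
  cvgn (series D) -> cvgn (series f).
Proof.
move=> fD cD; apply: normed_cvg; apply: (series_le_cvg _ _ fD cD) => // n.
exact: le_trans (fD n).
Qed.

Lemma rsum_tail_le f D N : (forall n, `|f n| <= D n) -> cvgn (series D) ->
  `|rsum f - series f N| <= rsum D - series D N.
Proof.
move=> fD cD; have cf := cvg_series_dominated _ _ fD cD.
have D0 n : 0 <= D n by apply: le_trans (fD n).
have tail : (fun n => `|series f n - series f N|) @ \oo --> `|rsum f - series f N|.
  by apply: cvg_norm; apply: cvgB => //; exact: cvg_cst.
rewrite -(cvg_lim _ tail) //; apply: limr_le; first by apply/cvg_ex; eexists; exact: tail.
near=> n; have Nn : (N <= n)%N by near: n; exact: nbhs_infty_ge.
rewrite sub_series_geq //; apply: le_trans (ler_norm_sum _ _ _) _.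
apply: (@le_trans _ _ (series D n - series D N)).
  by rewrite sub_series_geq //; apply: ler_sum => k _; exact: fD.
rewrite lerD2r; apply: nondecreasing_cvgn_le => //.
by move=> p q pq; apply: nondecreasing_series => // k _ _; exact: D0.
Unshelve. all: by end_near. Qed.

Lemma rsum_dominated_cvg (f : nat -> nat -> R) g D :
  (forall m n, `|f m n| <= D n) -> (forall n, `|g n| <= D n) ->
  (forall n, f ^~ n @ \oo --> g n) -> cvgn (series D) ->
  (fun m => rsum (f m)) @ \oo --> rsum g.
Proof.
move=> fD gD fg cD; apply/cvgrPdist_lt => e e0.
have e4 : 0 < e / 4 by rewrite divr_gt0.
have /cvgrPdist_lt/(_ _ e4) [N _ tailD] := cvgP _ cD.
have {tailD} tailD : rsum D - series D N < e / 4.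
  by apply: le_lt_trans (ler_norm _) (tailD N (leqnn N)).
have head : (fun m => series (f m) N) @ \oo --> series g N.
  by under eq_cvg do rewrite /series /=; apply: cvg_big => //; exact: add_continuous.
near=> m.
have headm : `|series g N - series (f m) N| < e / 4.
  by near: m; move/cvgrPdist_lt: head; apply.
have tailg := rsum_tail_le _ _ N gD cD; have tailf := rsum_tail_le _ _ N (fD m) cD.
have -> : rsum g - rsum (f m) = (rsum g - series g N)
  + (series g N - series (f m) N) - (rsum (f m) - series (f m) N).
  by rewrite opprB !addrA subrK addrNK.
apply: le_lt_trans (ler_normB _ _) _; apply: le_lt_trans (lerD (ler_normD _ _) (lexx _)) _.
lra.
Unshelve. all: by end_near. Qed.

Lemma cvgn_bounded_above f : cvgn f -> exists M, forall n, f n <= M.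
Proof.
move=> /cvg_seq_bounded [M [_ fM]]; exists (M + 1) => n.
apply: le_trans (ler_norm _) _; by apply: fM => //; rewrite ltrDl.
Qed.

Lemma cvgDlE f {g} {p : R} : g @ \oo --> p ->
  forall l, (f + g) @ \oo --> l + p <-> f @ \oo --> l.
Proof.
move=> gp l; split=> [fg|fl]; last exact: cvgD.
rewrite -[l](addrK p); apply: cvg_trans (cvgB fg gp); apply: near_eq_cvg.
by apply: nearW => n; rewrite /= addrK.
Qed.

End real_series.

Section sequence_spaces.
Context {R : realType}.
Implicit Types x : nat -> R.

Lemma unit_vec_support j k : (j < k)%N -> @unit_vec R j k = 0.
Proof. by move=> jk; rewrite /unit_vec gtn_eqF. Qed.

Lemma pairing_unit_vec x j : pairing x (unit_vec j) = x j.
Proof.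
rewrite /pairing (@rsum_finite_support _ _ j.+1); last first.
  by move=> k jk; rewrite unit_vec_support // mulr0.
rewrite big_ord_recr /= /unit_vec eqxx mulr1 big1 ?add0r // => i _.
by rewrite (ltn_eqF (ltn_ord i)) mulr0.
Qed.

Lemma l1_mem_unit_vec j : l1_mem (@unit_vec R j).
Proof.
apply/cvg_ex; exists (\sum_(k < j.+1) `|unit_vec j k|).
by apply: cvg_series_finite_support => k jk; rewrite unit_vec_support ?normr0.
Qed.

Lemma weak_star_cvg_coord (z : nat -> nat -> R) zl :
  weak_star_cvg z zl -> forall k, z ^~ k @ \oo --> zl k.
Proof.
move=> wz k; have := wz _ (l1_mem_unit_vec k); rewrite pairing_unit_vec.
by under eq_fun do rewrite pairing_unit_vec.
Qed.

Lemma normr_le_linf_norm {x} : linf_mem x -> forall k, `|x k| <= linf_norm x.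
Proof.
move=> [M xM] k; apply: ub_le_sup; last by exists k.
by exists M => _ [n _ <-].
Qed.

End sequence_spaces.

Definition test_vec {R : realType} (u : nat -> nat -> rat) (a : nat -> nat) n :
  nat -> R := fun k => rat_seq (u n) k - unit_vec (a n) k.

Definition weight {R : realType} (a : nat -> nat) n : R := 2 ^- (a n ^ 2)%N.

Definition perturbation {R : realType} u a (x : nat -> R) : R :=
  rsum (fun n => weight a n * `|pairing x (test_vec u a n)|).

Section triple_norm.
Context {R : realType} {u : nat -> nat -> rat} {a : nat -> nat}.
Hypothesis Ha : admissible_a u a.
Implicit Types x : nat -> R.

Lemma triple_normE x : triple_norm u a x = linf_norm x + perturbation u a x.
Proof. by []. Qed.

Lemma admissible_u_support n k : (a n <= k)%N -> u n k = 0.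
Proof.
move=> ank; have [_ [_ [supp_u _]]] := Ha.
by apply/eqP; apply: contraTT ank => /supp_u; rewrite -ltnNge.
Qed.

Lemma test_vec_support n k : (a n < k)%N -> test_vec u a n k = 0 :> R.
Proof.
move=> ank; rewrite /test_vec /rat_seq unit_vec_support //.
by rewrite admissible_u_support ?rmorph0 ?subrr // ltnW.
Qed.

Lemma pairing_test_vec x n :
  pairing x (test_vec u a n) = \sum_(k < (a n).+1) x k * test_vec u a n k.
Proof.
by apply: rsum_finite_support => k ank; rewrite test_vec_support ?mulr0.
Qed.

Lemma sum_norm_test_vec n : \sum_(k < (a n).+1) `|test_vec u a n k : R| <= (a n).+1%:R.
Proof.
have [_ [_ [_ l1_u]]] := Ha.
apply: le_trans (ler_sum _ (fun k _ => ler_normB _ _)) _.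
rewrite big_split /= -natr1; apply: lerD.
  rewrite big_ord_recr /= /rat_seq admissible_u_support // rmorph0 normr0 addr0.
  under eq_bigr do rewrite -ratr_norm.
  by rewrite -rmorph_sum -(ratr_nat R) ler_rat; apply/ltW/l1_u.
rewrite (bigD1 ord_max) //= big1 => [|k /negbTE kan]; last first.
  by rewrite /unit_vec -val_eqE /= in kan *; rewrite kan normr0.
by rewrite /unit_vec eqxx normr1 addr0.
Qed.

Lemma norm_pairing_test_vec_le x X n : (forall k, `|x k| <= X) ->
  `|pairing x (test_vec u a n)| <= X * (a n).+1%:R.
Proof.
move=> xX; have X0 : 0 <= X := le_trans (normr_ge0 _) (xX 0%N).
rewrite pairing_test_vec; apply: le_trans (ler_norm_sum _ _ _) _.
apply: le_trans (ler_wpM2l X0 (sum_norm_test_vec n)); rewrite big_distrr /=.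
by apply: ler_sum => k _; rewrite normrM ler_wpM2r.
Qed.

Lemma weight_mul_le n : weight a n * (a n).+1%:R <= 2 * (2^-1 : R) ^+ n.
Proof.
have [a_incr _] := Ha.
have n_le_an : (n <= a n)%N by elim: n => // n IH; exact: leq_ltn_trans IH (a_incr n).
have key : ((a n).+1 * 2 ^ n <= 2 * 2 ^ (a n ^ 2))%N.
  apply: (@leq_trans ((a n).+1 * 2 ^ a n)); first by rewrite leq_mul2l leq_pexp2l.
  apply: (@leq_trans (2 ^ a n * 2 ^ a n)); first by rewrite leq_mul2r ltn_expl ?orbT.
  rewrite -expnD -expnS leq_pexp2l //; nia.
rewrite /weight exprVn mulrC ler_pdivrMr ?exprn_gt0 // mulrAC ler_pdivlMr ?exprn_gt0 //.
by rewrite -!natrX -!natrM ler_nat.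
Qed.

Lemma cvg_series_weight (X : R) : 0 <= X ->
  cvgn (series (fun n => X * (weight a n * (a n).+1%:R))).
Proof.
move=> X0; have w0 n : 0 <= weight a n :> R by rewrite invr_ge0 exprn_ge0.
apply: (@series_le_cvg _ _ (geometric (X * 2) 2^-1)) => [n|n|n|].
- by rewrite !mulr_ge0 ?w0.
- by rewrite /geometric /= !mulr_ge0 ?exprn_ge0.
- by rewrite /geometric /= -mulrA ler_wpM2l ?weight_mul_le.
- by apply: is_cvg_geometric_series; rewrite gtr0_norm ?invr_gt0 //; lra.
Qed.

Lemma perturbation_term_le x X n : (forall k, `|x k| <= X) ->
  `|weight a n * `|pairing x (test_vec u a n)| | <= X * (weight a n * (a n).+1%:R).
Proof.
move=> xX; rewrite normrM normr_id ger0_norm ?invr_ge0 ?exprn_ge0 // mulrCA.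
by rewrite ler_wpM2l ?invr_ge0 ?exprn_ge0 ?norm_pairing_test_vec_le.
Qed.

Lemma perturbation_ge0 {x} : linf_mem x -> 0 <= perturbation u a x.
Proof.
move=> [X xX]; have X0 : 0 <= X := le_trans (normr_ge0 _) (xX 0%N).
apply: rsum_ge0 => [n|]; first by rewrite mulr_ge0 ?invr_ge0 ?exprn_ge0.
apply: (cvg_series_dominated _ _ _ (cvg_series_weight X X0)) => n.
exact: perturbation_term_le.
Qed.

Lemma linf_norm_le_triple_norm {x} : linf_mem x -> linf_norm x <= triple_norm u a x.
Proof. by move=> xb; rewrite triple_normE lerDl perturbation_ge0. Qed.

Lemma perturbation_cvg (z : nat -> nat -> R) zl X :
  (forall m k, `|z m k| <= X) -> (forall k, `|zl k| <= X) ->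
  (forall k, z ^~ k @ \oo --> zl k) ->
  (fun m => perturbation u a (z m)) @ \oo --> perturbation u a zl.
Proof.
move=> zX zlX zzl; have X0 : 0 <= X := le_trans (normr_ge0 _) (zlX 0%N).
apply: rsum_dominated_cvg (cvg_series_weight X X0) => [m n|n|n].
- exact: perturbation_term_le.
- exact: perturbation_term_le.
- under eq_fun do rewrite pairing_test_vec; rewrite pairing_test_vec.
  apply: cvgMr; apply: cvg_norm; apply: cvg_big => [|k _]; first exact: add_continuous.
  exact: cvgMl.
Qed.

End triple_norm.

Theorem mainTheorem2 (R : realType) (u : nat -> nat -> rat) (a : nat -> nat)
    (z : nat -> nat -> R) (zl : nat -> R) :
  lists_c00_inf_often u ->
  admissible_a u a ->
  (forall m, linf_mem (z m)) ->
  linf_mem zl ->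
  weak_star_cvg z zl ->
  (cvgn (fun m => triple_norm u a (z m)) <-> cvgn (fun m => linf_norm (z m))) /\
  ((fun m => triple_norm u a (z m)) @ \oo --> triple_norm u a zl <->
   (fun m => linf_norm (z m)) @ \oo --> linf_norm zl).
Proof.
move=> _ Ha zb zlb /weak_star_cvg_coord zzl.
pose T m := triple_norm u a (z m); pose L m := linf_norm (z m).
have L_bounded : cvgn T \/ cvgn L -> exists M, forall m, L m <= M.
  have L_le_T m : L m <= T m := linf_norm_le_triple_norm Ha (zb m).
  case=> /cvgn_bounded_above [M hM]; exists M => m; last exact: hM.
  exact: le_trans (L_le_T m) (hM m).
have P_cvg : cvgn T \/ cvgn L ->
    (fun m => perturbation u a (z m)) @ \oo --> perturbation u a zl.
  move=> /L_bounded [M LM]; apply: (perturbation_cvg Ha _ _ (Num.max M (linf_norm zl))).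
  - by move=> m k; rewrite le_max (le_trans (normr_le_linf_norm (zb m) k) (LM m)).
  - by move=> k; rewrite le_max normr_le_linf_norm ?orbT.
  - exact: zzl.
split; split=> h.
- have /cvgP hP := P_cvg (or_introl h).
  by rewrite -(is_cvgDlE L hP).
- have /cvgP hP := P_cvg (or_intror h).
  by rewrite -(is_cvgDlE L hP) in h.
- have hP := P_cvg (or_introl (cvgP _ h)).
  by rewrite -(cvgDlE L hP).
- have hP := P_cvg (or_intror (cvgP _ h)).
  by rewrite -(cvgDlE L hP) in h.
Qed.
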